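(* Let $(Q,\cdot)$ be a quadratical quasigroup of order $9$. Then there exist distinct $a,b\in Q$ such that $Q=\{aba\}\cup H1\cup H2$, i.e. $Q=\{aba,\ a,\ ab,\ ba,\ b,\ a\cdot ab,\ ab\cdot b,\ ba\cdot a,\ b\cdot ba\}$.
   Context: A quadratical quasigroup is a quasigroup $(Q,\cdot)$ satisfying $xy\cdot x=zx\cdot yz$ for all $x,y,z\in Q$; equivalently, a groupoid satisfying $x\cdot x=x$, $yx\cdot xy=x$ and $xy\cdot zw=xz\cdot yw$. For distinct $a,b$, $aba$ denotes $ab\cdot a$, $H1=\{a,ab,ba,b\}$ and $H2=\{a\cdot ab,\ ab\cdot b,\ ba\cdot a,\ b\cdot ba\}$. *)

From mathcomp Require Import all_boot.
Set Implicit Arguments. Unset Strict Implicit. Unset Printing Implicit Defensive.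

Definition quasigroup (Q : Type) (mul : Q -> Q -> Q) : Prop :=
  (forall a, bijective (mul a)) /\ (forall a, bijective (fun y => mul y a)).

Definition quadratical (Q : Type) (mul : Q -> Q -> Q) : Prop :=
  quasigroup mul /\
  forall x y z, mul (mul x y) x = mul (mul z x) (mul y z).

Definition H1 (Q : finType) (mul : Q -> Q -> Q) (a b : Q) : {set Q} :=
  [set a; mul a b; mul b a; b].

Definition H2 (Q : finType) (mul : Q -> Q -> Q) (a b : Q) : {set Q} :=
  [set mul a (mul a b); mul (mul a b) b; mul (mul b a) a; mul b (mul b a)].

Definition aba (Q : Type) (mul : Q -> Q -> Q) (a b : Q) : Q := mul (mul a b) a.

From mathcomp Require Import all_boot zify.

(* For distinct a, b the nine listed elements are pairwise distinct, hence
   exhaust Q.  Most of the 36 inequalities hold in every quadratical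
   quasigroup, which is idempotent, flexible, left and right distributive and
   in which xy = yx only for x = y.  The symmetries a <-> b and x.y <-> y.x
   reduce the remaining ones to a.ab <> b and a.ab <> ba, and these use the
   order.  A proper subquasigroup of a quasigroup of order 9 has at most 4
   elements, while the one generated by a and b contains the five distinct
   elements a, b, ab, ba, aba; so two endomorphisms agreeing on a and b
   coincide.  Write L_c, R_c for the translations by c.  If a.ab = b this
   makes L_a^2 the identity, and then every L_c is an involution; but then
   {a, b, ab, ba, aba} is a subquasigroup.  If a.ab = ba it makes
   R_a = L_a^2, hence R_c = L_c^2 for every c, so Q is right symmetric: the
   previous case for the converse operation. *)

Set Implicit Arguments.
Unset Strict Implicit.
Unset Printing Implicit Defensive.

Definition mul_closed (Q : finType) (mul : Q -> Q -> Q) (S : {set Q}) : Prop :=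
  {in S &, forall x y, mul x y \in S}.

Definition abaH1seq (Q : Type) (mul : Q -> Q -> Q) (a b : Q) : seq Q :=
  [:: aba mul a b; mul a b; mul b a; a; b].

Definition H2seq (Q : Type) (mul : Q -> Q -> Q) (a b : Q) : seq Q :=
  [:: mul a (mul a b); mul (mul a b) b; mul (mul b a) a; mul b (mul b a)].

Section Quasigroup.

Variables (Q : Type) (mul : Q -> Q -> Q).
Hypothesis qgQ : quasigroup mul.

Lemma mulqI a : injective (mul a).
Proof. exact: bij_inj (proj1 qgQ a). Qed.

Lemma mulIq a : injective (mul^~ a).
Proof. exact: bij_inj (proj2 qgQ a). Qed.

Lemma mulq_lsolve a c : exists y, mul a y = c.
Proof. by case: (proj1 qgQ a) => g _ gK; exists (g c); rewrite gK. Qed.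

Lemma mulq_rsolve a c : exists y, mul y a = c.
Proof. by case: (proj2 qgQ a) => g _ gK; exists (g c); rewrite gK. Qed.

End Quasigroup.

Arguments mulqI {Q mul} qgQ a [x1 x2].
Arguments mulIq {Q mul} qgQ a [x1 x2].

Section FiniteQuasigroup.

Variables (Q : finType) (mul : Q -> Q -> Q).
Hypothesis qgQ : quasigroup mul.

Lemma proper_mul_closed_card (S : {set Q}) t :
  mul_closed mul S -> t \notin S -> (2 * #|S| <= #|Q|)%N.
Proof.
move=> clS tS.
(* Right translations by elements of S permute S, so t * S misses S. *)
have tS_out : [set mul t s | s in S] \subset ~: S.
  apply/subsetP => _ /imsetP[s sS ->]; rewrite inE; apply: contra tS => tsS.
  have /eqP rmulS : [set mul w s | w in S] == S.
    rewrite eqEcard card_imset ?leqnn ?andbT; last exact: mulIq.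
    by apply/subsetP => _ /imsetP[w wS ->]; exact: clS.
  by move: tsS; rewrite -{1}rmulS => /imsetP[w wS /(mulIq qgQ s) ->].
have := subset_leq_card tS_out; rewrite card_imset; last exact: mulqI.
have := cardsC S; lia.
Qed.

End FiniteQuasigroup.

Section Quadratical.

Variables (Q : eqType) (mul : Q -> Q -> Q).
Hypothesis mulQ : quadratical mul.
Local Infix "*" := mul.
Let qgQ : quasigroup mul := proj1 mulQ.

Lemma quadraticalE x y z : x * y * x = z * x * (y * z).
Proof. exact: (proj2 mulQ). Qed.

Lemma mulqq x : x * x = x.
Proof. by apply: (mulqI qgQ (x * x)); rewrite -quadraticalE. Qed.

Lemma mulqK x y : y * x * (x * y) = x.
Proof. by rewrite -quadraticalE !mulqq. Qed.

Lemma mulq_flex x y : x * y * x = x * (y * x).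
Proof. by rewrite (quadraticalE x y x) mulqq. Qed.

Lemma mulq_swap x y : x * y * x = y * x * y.
Proof. by rewrite (quadraticalE x y y) mulqq. Qed.

Lemma mulq_lmul_aba x y : y * (x * y) = x * y * x.
Proof. by rewrite -mulq_flex mulq_swap. Qed.

Lemma mulq_ldist x y z : x * (y * z) = x * y * (x * z).
Proof.
have [w zw] := mulq_lsolve qgQ z x.
have xz : x * z = w * x by rewrite -zw mulq_lmul_aba.
by rewrite xz -quadraticalE mulq_swap (quadraticalE w y z) zw.
Qed.

Lemma mulq_rdist x y z : x * y * z = x * z * (y * z).
Proof.
have [w wx] := mulq_rsolve qgQ x z.
have xz : x * z = z * w by rewrite -wx mulq_lmul_aba.
by rewrite xz -quadraticalE -mulq_swap (quadraticalE y w x) wx.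
Qed.

Lemma quadratical_converse : quadratical (fun x y => y * x).
Proof.
have [lbij rbij] := qgQ; split; first by split.
by move=> x y z /=; rewrite mulq_lmul_aba (quadraticalE y x z).
Qed.

Lemma mulq_eql x y : (x * y == x) = (x == y).
Proof.
apply/eqP/eqP => [xyx | <-]; last exact: mulqq.
by apply: (mulqI qgQ x); rewrite mulqq xyx.
Qed.

Lemma mulq_eqr x y : (x * y == y) = (x == y).
Proof.
apply/eqP/eqP => [xyy | ->]; last exact: mulqq.
by apply: (mulIq qgQ y); rewrite mulqq xyy.
Qed.

Lemma mulq_eqC x y : (x * y == y * x) = (x == y).
Proof.
apply/eqP/eqP => [xyC | ->] //.
by apply/eqP; rewrite -mulq_eql -{2}(mulqK x y) -xyC mulqq.
Qed.

Lemma abaH1seq_uniq a b : a != b -> uniq (abaH1seq mul a b).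
Proof.
move=> ab.
have aba_b : (a * b * a == b) = (a == b).
  by rewrite mulq_swap mulq_eqr mulq_eql eq_sym.
have aba_ba : (a * b * a == b * a) = (a == b).
  by rewrite mulq_flex mulq_eqr eq_sym mulq_eqr eq_sym.
rewrite /= !inE aba_b aba_ba !mulq_eql !mulq_eqr mulq_eqC mulq_eql (eq_sym b a).
by rewrite (negbTE ab).
Qed.

Lemma abaH1seqC a b : abaH1seq mul b a =i abaH1seq mul a b.
Proof.
move=> x; rewrite !inE /aba (mulq_swap b a); congr (_ || _).
by rewrite orbCA (orbC (x == b)).
Qed.

Lemma abaH1seq_converse a b :
  abaH1seq (fun x y => y * x) a b =i abaH1seq mul a b.
Proof.
move=> x; rewrite !inE /aba /= -mulq_flex; congr (_ || _).
by rewrite orbCA.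
Qed.

Lemma eq_aab_aba x y : (x * (x * y) == x * y * x) = (x == y).
Proof. by rewrite mulq_flex (inj_eq (mulqI qgQ x)) mulq_eqC. Qed.

Lemma aab_neq_baa x y : x != y -> x * (x * y) != y * x * x.
Proof.
move=> xy; apply: contra xy => /eqP E.
rewrite -eq_aab_aba eq_sym -mulq_eqC.
by rewrite mulqK E mulq_flex mulqK.
Qed.

Lemma aab_neq_abb x y : x != y -> x * (x * y) != x * y * y.
Proof.
move=> xy; apply: contra xy => /eqP E.
have xyE := mulq_rdist x y (x * y).
rewrite mulqq E mulq_lmul_aba -mulq_ldist in xyE.
rewrite -mulq_eqC; apply/eqP/(mulqI qgQ (x * y)).
by rewrite mulqq; exact: xyE.
Qed.

Lemma aab_neq_bba x y : x != y -> x * (x * y) != y * (y * x).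
Proof.
move=> xy; apply: contra xy => /eqP E.
by have := mulqK x (x * y); rewrite E -mulq_swap mulqK => ->.
Qed.

(* Right translations are automorphisms, and they carry a to any c. *)
Lemma lmul_involutive_everywhere a :
  (forall x, a * (a * x) = x) -> forall c x, c * (c * x) = x.
Proof.
move=> aK c x.
have [y <-] := mulq_lsolve qgQ a c.
have [z <-] := mulq_rsolve qgQ y x.
by rewrite -!mulq_rdist aK.
Qed.

Lemma rmul_lmul2_right_symmetric a :
  (forall x, x * a = a * (a * x)) -> forall x y, x * y * y = x.
Proof.
move=> aR.
have cR c x : x * c = c * (c * x).
  have [y <-] := mulq_lsolve qgQ a c.
  have [z <-] := mulq_rsolve qgQ y x.
  by rewrite -!mulq_rdist aR.
move=> x y; apply: (mulqI qgQ x).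
by rewrite mulq_ldist -cR mulqK mulqq.
Qed.

Lemma lsym_mul_lmul (lsym : forall x y, x * (x * y) = y) x y z :
  x * y * z = x * (y * (x * z)).
Proof. by rewrite mulq_ldist lsym. Qed.

Lemma lsym_abaH1seq_lmul (lsym : forall x y, x * (x * y) = y) a b :
  {in abaH1seq mul a b, forall s, a * s \in abaH1seq mul a b}.
Proof.
apply/allP; rewrite /abaH1seq /aba /= !inE.
rewrite mulq_flex !lsym mulqq.
by rewrite !eqxx ?orbT.
Qed.

End Quadratical.

Section Order9.

Variable Q : finType.
Hypothesis card9 : #|Q| = 9.

Section Subquasigroups.

Variable mul : Q -> Q -> Q.
Hypothesis mulQ : quadratical mul.
Local Infix "*" := mul.

Lemma mul_closed_pair_full (S : {set Q}) a b :
  a != b -> a \in S -> b \in S -> mul_closed mul S -> S = [set: Q].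
Proof.
move=> ab aS bS clS; apply/setP => t; rewrite inE; apply: contraT => tS.
have card5S : (5 <= #|S|)%N.
  rewrite -[5%N]/(size (abaH1seq mul a b)) -(card_uniqP (abaH1seq_uniq mulQ ab)).
  apply/subset_leq_card/subsetP/allP.
  by rewrite /= /aba aS bS !clS.
by have := proper_mul_closed_card (proj1 mulQ) clS tS; rewrite card9; lia.
Qed.

Lemma morph_eq_on_pair (f g : Q -> Q) a b : a != b ->
  {morph f : x y / x * y} -> {morph g : x y / x * y} ->
  f a = g a -> f b = g b -> f =1 g.
Proof.
move=> ab fM gM fa fb x.
have eqS_full : [set y | f y == g y] = [set: Q].
  apply: (mul_closed_pair_full ab); rewrite ?inE ?fa ?fb //.
  by move=> u v; rewrite !inE fM gM => /eqP-> /eqP->.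
have : x \in [set y | f y == g y] by rewrite eqS_full inE.
by rewrite inE => /eqP.
Qed.

Lemma not_left_symmetric : ~ (forall x y, x * (x * y) = y).
Proof.
move=> lsym.
have /card_gt1P[a [b [_ _ ab]]] : (1 < #|Q|)%N by rewrite card9.
pose S := [set s in abaH1seq mul a b].
have aS : a \in S by rewrite !inE eqxx !orbT.
have bS : b \in S by rewrite !inE eqxx !orbT.
(* Under left symmetry L_(cd) = L_c L_d L_c, so G is a subquasigroup. *)
pose G := [set c | [forall s in S, c * s \in S]].
have GP c : reflect {in S, forall s, c * s \in S} (c \in G).
  by rewrite inE; exact: forall_inP.
have clG : mul_closed mul G.
  move=> c d /GP cS /GP dS; apply/GP => s sS.
  by rewrite lsym_mul_lmul //; apply/cS/dS/cS.
have aG : a \in G by apply/GP => s; rewrite !in_set; exact: lsym_abaH1seq_lmul.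
have bG : b \in G.
  apply/GP => s; rewrite !in_set -!(abaH1seqC mulQ a).
  exact: lsym_abaH1seq_lmul.
have clS : mul_closed mul S.
  by move=> c s _; apply/GP; rewrite (mul_closed_pair_full ab aG bG clG) inE.
have Sfull := mul_closed_pair_full ab aS bS clS.
by have := card_size (abaH1seq mul a b); rewrite -cardsE -/S Sfull cardsT card9.
Qed.

End Subquasigroups.

Section Distinctness.

Variable mul : Q -> Q -> Q.
Hypothesis mulQ : quadratical mul.
Local Infix "*" := mul.

Lemma not_right_symmetric : ~ (forall x y, x * y * y = x).
Proof.
move=> rsym; apply: (not_left_symmetric (quadratical_converse mulQ)).
by move=> x y; exact: rsym.
Qed.

Lemma aab_neq_b a b : a != b -> a * (a * b) != b.
Proof.
move=> ab; apply/eqP => aab; apply: (not_left_symmetric mulQ).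
apply: (lmul_involutive_everywhere mulQ (a := a)) => x; symmetry.
apply: (morph_eq_on_pair mulQ ab (f := id) (g := fun y => a * (a * y))).
- by [].
- by move=> y z /=; rewrite (mulq_ldist mulQ a y z) (mulq_ldist mulQ).
- by rewrite !(mulqq mulQ).
- by rewrite aab.
Qed.

Lemma aab_neq_ba a b : a != b -> a * (a * b) != b * a.
Proof.
move=> ab; apply/eqP => aab; apply: not_right_symmetric.
apply: (rmul_lmul2_right_symmetric mulQ (a := a)).
apply: (morph_eq_on_pair mulQ ab (f := mul^~ a) (g := fun y => a * (a * y))).
- by move=> y z; exact: mulq_rdist.
- by move=> y z /=; rewrite (mulq_ldist mulQ a y z) (mulq_ldist mulQ).
- by rewrite !(mulqq mulQ).
- by rewrite aab.
Qed.

Lemma aab_notin_abaH1seq a b : a != b -> a * (a * b) \notin abaH1seq mul a b.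
Proof.
move=> ab; rewrite !inE /aba (eq_aab_aba mulQ) (mulq_eqr mulQ) (mulq_eql mulQ).
rewrite (eq_sym a (a * b)) (mulq_eql mulQ) (negbTE ab).
by rewrite (negbTE (aab_neq_ba ab)) (negbTE (aab_neq_b ab)).
Qed.

End Distinctness.

Lemma abaH1seq_H2seq_uniq (mul : Q -> Q -> Q) (mulQ : quadratical mul) a b :
  a != b -> uniq (abaH1seq mul a b ++ H2seq mul a b).
Proof.
move=> ab; have ba : b != a by rewrite eq_sym.
have mulQc := quadratical_converse mulQ.
rewrite cat_uniq abaH1seq_uniq //=.
have aab : mul a (mul a b) \notin abaH1seq mul a b := aab_notin_abaH1seq mulQ ab.
(* b.ba, ba.a and ab.b are a.ab for the pair (b, a), for the converse
   operation, and for both. *)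
have bba : mul b (mul b a) \notin abaH1seq mul a b.
  by rewrite -(abaH1seqC mulQ); exact: aab_notin_abaH1seq.
have baa : mul (mul b a) a \notin abaH1seq mul a b.
  by rewrite -(abaH1seq_converse mulQ); exact: (aab_notin_abaH1seq mulQc ab).
have abb : mul (mul a b) b \notin abaH1seq mul a b.
  rewrite -(abaH1seqC mulQ) -(abaH1seq_converse mulQ).
  exact: (aab_notin_abaH1seq mulQc ba).
rewrite (negbTE aab) (negbTE bba) (negbTE baa) (negbTE abb) /= !inE.
rewrite (negbTE (aab_neq_abb mulQ ab)) (negbTE (aab_neq_baa mulQ ab)).
rewrite (negbTE (aab_neq_bba mulQ ab)) (negbTE (aab_neq_bba mulQc ba)).
by rewrite (negbTE (aab_neq_baa mulQc ba)) (negbTE (aab_neq_abb mulQc ab)).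
Qed.

End Order9.

Theorem proposition4p2 (Q : finType) (mul : Q -> Q -> Q) :
  quadratical mul -> #|Q| = 9 ->
  exists a b : Q, a != b /\
    [set: Q] = [set aba mul a b] :|: H1 mul a b :|: H2 mul a b.
Proof.
move=> mulQ card9.
have /card_gt1P[a [b [_ _ ab]]] : (1 < #|Q|)%N by rewrite card9.
exists a, b; split=> //.
apply/eqP; rewrite eq_sym eqEcard subsetT cardsT card9 /=.
rewrite -[9%N]/(size (abaH1seq mul a b ++ H2seq mul a b)).
rewrite -(card_uniqP (abaH1seq_H2seq_uniq card9 mulQ ab)).
apply/subset_leq_card/subsetP/allP.
by rewrite /= /H1 /H2 !inE !eqxx ?orbT.
Qed.
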